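(* Suppose $U_1,\dots,U_N,V_1,\dots,V_n\in\mathbb{R}^d$ form a margin-$m$, relative-bias-$0$ embedding of $S_{n,k}$ with $0<m<1$. Then for every $T\subset[n]$ with $\max\bigl\{1,\,k-\frac{2m(n-k)}{1-m}\bigr\}\le|T|\le k$ there exist $h\in\mathbb{S}^{d-1}$ and $c\in\mathbb{R}$ such that $\langle h,V_i\rangle\ge c$ for all $i\in T$ and $\langle h,V_j\rangle\le c$ for all $j\notin T$.
   Context: $S_{n,k}\in\{0,1\}^{\binom{n}{k}\times n}$ (so $N=\binom nk$) is the matrix whose rows are all the distinct vectors in $\{0,1\}^n$ with exactly $k$ ones, each appearing exactly once. For $A\in\{0,1\}^{N\times n}$ and $m\ge0$, unit vectors $U_1,\dots,U_N,V_1,\dots,V_n\in\mathbb{R}^d$ form a margin-$m$, relative-bias-$0$ embedding of $A$ if $\langle U_j,V_i\rangle\ge m$ whenever $A_{ji}=1$ and $\langle U_j,V_i\rangle\le -m$ whenever $A_{ji}=0$. *)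

From mathcomp Require Import all_boot all_order all_algebra.
From mathcomp Require Import reals.
Set Implicit Arguments. Unset Strict Implicit. Unset Printing Implicit Defensive.
Import Order.TTheory GRing.Theory Num.Theory.
Local Open Scope ring_scope.

Definition dotp (R : realType) (d : nat) (u v : 'rV[R]_d) : R :=
  \sum_(l < d) u 0 l * v 0 l.

Definition unitv (R : realType) (d : nat) (u : 'rV[R]_d) : Prop :=
  dotp u u = 1.

(* Row index type of S_{n,k}: the k-subsets of [n] = 'I_n, each appearing
   exactly once; row A of S_{n,k} is the indicator vector of A. *)
Definition Snk_rows (n k : nat) : finType := {A : {set 'I_n} | #|A| == k}.

Definition Snk (n k : nat) : Snk_rows n k -> 'I_n -> bool :=
  fun A i => i \in val A.

Definition embedding (R : realType) (d n : nat) (I : finType)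
  (A : I -> 'I_n -> bool) (m : R)
  (U : I -> 'rV[R]_d) (V : 'I_n -> 'rV[R]_d) : Prop :=
  (forall j, unitv (U j)) /\ (forall i, unitv (V i)) /\
  (forall j i, A j i -> m <= dotp (U j) (V i)) /\
  (forall j i, ~~ A j i -> dotp (U j) (V i) <= - m).

(* Let h be the sum of the U_A over the W k-sets A containing T.  Each
   V_i with i in T meets all W rows with margin m, so <h, V_i> >= W m.  For
   j outside T only a fraction (k - |T|) / (n - |T|) of these rows contain j;
   the others contribute at most -m and these at most 1, so
   <h, V_j> <= W ((1 + m)(k - |T|) / (n - |T|) - m), which the lower bound on
   |T| makes at most W m.  Normalising h gives the separating unit vector. *)

From mathcomp Require Import all_boot all_order all_algebra.
From mathcomp Require Import reals.
From mathcomp Require Import ring lra zify.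
Import Order.TTheory GRing.Theory Num.Theory.
Set Implicit Arguments. Unset Strict Implicit. Unset Printing Implicit Defensive.

Section Supsets.
Variable T : finType.

Lemma card_supsets (X : {set T}) k : (#|X| <= k)%N ->
  #|[set B : {set T} | X \subset B & #|B| == k]| = 'C(#|T| - #|X|, k - #|X|).
Proof.
move=> leXk; have -> : (#|T| - #|X| = #|~: X|)%N by rewrite [#|~: X|]cardsCs setCK.
rewrite -cards_draws.
have setUXK (A : {set T}) : A \subset ~: X -> (X :|: A) :\: X = A.
  by rewrite -disjoints_subset setDUl setDv set0U => /setDidPl.
rewrite -[in RHS](@card_in_imset _ _ (setU X)); last first.
  by move=> A1 A2; rewrite !inE => /andP[/setUXK e1 _] /andP[/setUXK e2 _] e;
    rewrite -e1 -e2 e.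
apply: eq_card => B; rewrite inE; apply/andP/imsetP.
- move=> [sXB /eqP cB]; exists (B :\: X).
    by rewrite inE subDset setUCr subsetT cardsDS // cB eqxx.
  by rewrite setDE setUIr setUCr setIT (setUidPr sXB).
- move=> [A]; rewrite inE => /andP[sAX /eqP cA] ->; split; first exact: subsetUl.
  have /eqP XA0 : X :&: A == set0 by rewrite setI_eq0 disjoint_sym disjoints_subset.
  by rewrite cardsU XA0 cards0 subn0 cA subnKC.
Qed.

Lemma card_supsetsU1 (X : {set T}) j k : j \notin X ->
  (#|[set B : {set T} | j |: X \subset B & #|B| == k]| * (#|T| - #|X|) =
   #|[set B : {set T} | X \subset B & #|B| == k]| * (k - #|X|))%N.
Proof.
move=> jX; case: (ltnP #|X| k) => [ltXk | leKX].
  rewrite !card_supsets ?cardsU1 ?jX ?(ltnW ltXk) // add1n !subnS.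
  by rewrite mulnC mul_bin_diag prednK ?subn_gt0 // mulnC.
have /eqP -> : (k - #|X| == 0)%N by rewrite subn_eq0.
suff -> : [set B : {set T} | j |: X \subset B & #|B| == k] = set0 by rewrite cards0 muln0.
apply/setP => B; rewrite !inE; apply/negbTE/andP => -[sXB /eqP cB].
by have := subset_leq_card sXB; rewrite cardsU1 jX cB; lia.
Qed.

End Supsets.

Lemma card_Snk_rows_supsets n k (X : {set 'I_n}) :
  #|[set A : Snk_rows n k | X \subset val A]| =
  #|[set B : {set 'I_n} | X \subset B & #|B| == k]|.
Proof.
rewrite -(card_imset _ val_inj); apply: eq_card => B; rewrite inE.
apply/imsetP/andP => [[A] | [sXB cB]].
  by rewrite inE => sXA ->; split; last exact: (valP A).
by exists (Sub B cB); rewrite ?inE.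
Qed.

Local Open Scope ring_scope.

Section Dotp.
Variables (R : realType) (d : nat).
Implicit Types (u v : 'rV[R]_d).

Lemma dotpC u v : dotp u v = dotp v u.
Proof. by apply: eq_bigr => l _; rewrite mulrC. Qed.

Lemma dotpZl a u v : dotp (a *: u) v = a * dotp u v.
Proof. by rewrite /dotp mulr_sumr; apply: eq_bigr => l _; rewrite mxE mulrA. Qed.

Lemma dotp_suml (I : finType) (S : {set I}) (F : I -> 'rV[R]_d) v :
  dotp (\sum_(i in S) F i) v = \sum_(i in S) dotp (F i) v.
Proof.
rewrite /dotp exchange_big; apply: eq_bigr => l _.
by rewrite summxE mulr_suml.
Qed.

Lemma dotp_ge0 u : 0 <= dotp u u.
Proof. by apply: sumr_ge0 => l _; rewrite -expr2 sqr_ge0. Qed.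

Lemma dotp_self_gt0 u v : dotp u v != 0 -> 0 < dotp u u.
Proof.
rewrite lt_def dotp_ge0 andbT; apply: contra => /eqP uu0.
have u0 l : u 0 l = 0.
  apply/eqP; rewrite -[_ == 0]orbb -mulf_eq0; apply/eqP.
  by apply: (psumr_eq0P _ uu0) => // l' _; rewrite -expr2 sqr_ge0.
by apply/eqP/big1 => l _; rewrite u0 mul0r.
Qed.

Lemma dotp_unitv_le1 u v : unitv u -> unitv v -> dotp u v <= 1.
Proof.
rewrite /unitv => uu1 vv1.
have : 0 <= \sum_(l < d) (u 0 l - v 0 l) ^+ 2 by apply: sumr_ge0 => l _; apply: sqr_ge0.
have -> : \sum_(l < d) (u 0 l - v 0 l) ^+ 2 = dotp u u + dotp v v - 2 * dotp u v.
  by rewrite /dotp mulr_sumr -big_split -sumrB /=; apply: eq_bigr => l _; ring.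
by rewrite uu1 vv1; lra.
Qed.

Lemma unitv_normalize u : 0 < dotp u u -> unitv ((Num.sqrt (dotp u u))^-1 *: u).
Proof.
move=> uu_gt0; rewrite /unitv dotpZl dotpC dotpZl mulrA -expr2 exprVn.
by rewrite sqr_sqrtr ?ltW // mulVf ?gt_eqF.
Qed.

Lemma exists_unit_separator (I : finType) (V : I -> 'rV[R]_d) (T : {set I}) u c :
  0 < dotp u u ->
  (forall i, i \in T -> c <= dotp u (V i)) ->
  (forall j, j \notin T -> dotp u (V j) <= c) ->
  exists (h : 'rV[R]_d) (c' : R),
    unitv h /\
    (forall i, i \in T -> c' <= dotp h (V i)) /\
    (forall j, j \notin T -> dotp h (V j) <= c').
Proof.
move=> uu_gt0 cT cTC; set s := (Num.sqrt (dotp u u))^-1.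
have s_ge0 : 0 <= s by rewrite invr_ge0 sqrtr_ge0.
exists (s *: u), (s * c); split; first exact: unitv_normalize.
by split=> i iT; rewrite dotpZl ler_wpM2l // ?cT ?cTC.
Qed.

End Dotp.

Section EmbeddingSums.
Variables (R : realType) (d n : nat) (I : finType) (A : I -> 'I_n -> bool).
Variables (m : R) (U : I -> 'rV[R]_d) (V : 'I_n -> 'rV[R]_d).
Hypothesis embUV : embedding A m U V.

Lemma dotp_embedding_le r i : dotp (U r) (V i) <= (1 + m) * (A r i)%:R - m.
Proof.
have [Uunit [Vunit [Apos Aneg]]] := embUV.
case: (boolP (A r i)) => Ari; rewrite /= ?mulr1 ?mulr0 ?sub0r ?addrK ?Aneg //.
exact: dotp_unitv_le1.
Qed.

Lemma dotp_sum_ge (S : {set I}) i : (forall r, r \in S -> A r i) ->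
  #|S|%:R * m <= dotp (\sum_(r in S) U r) (V i).
Proof.
have [_ [_ [Apos _]]] := embUV.
move=> SA; rewrite dotp_suml mulr_natl -sumr_const.
by apply: ler_sum => r rS; apply/Apos/SA.
Qed.

Lemma dotp_sum_le (S : {set I}) i :
  dotp (\sum_(r in S) U r) (V i) <= (1 + m) * #|[set r in S | A r i]|%:R - #|S|%:R * m.
Proof.
have countE : \sum_(r in S) ((A r i)%:R : R) = #|[set r in S | A r i]|%:R.
  by rewrite -natr_sum -sum1dep_card big_mkcondr.
rewrite dotp_suml (le_trans (ler_sum _ (fun r _ => dotp_embedding_le r i))) //.
by rewrite sumrB -mulr_sumr countE sumr_const mulr_natl.
Qed.
End EmbeddingSums.

Section SnkSeparation.
Variables (R : realType) (d n k : nat) (m : R).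
Variables (U : Snk_rows n k -> 'rV[R]_d) (V : 'I_n -> 'rV[R]_d).
Hypotheses (embUV : embedding (Snk (n:=n) (k:=k)) m U V) (m_gt0 : 0 < m) (m_lt1 : m < 1).
Variable T : {set 'I_n}.
Hypotheses (leTk : (#|T| <= k)%N)
  (margin : k%:R - 2 * m * (n%:R - k%:R) / (1 - m) <= #|T|%:R).

Let S := [set A : Snk_rows n k | T \subset val A].

Let gap_le : (k%:R - #|T|%:R) * (1 - m) <= 2 * m * (n%:R - k%:R).
Proof. by rewrite -ler_pdivlMr ?subr_gt0 // lerBlDr addrC -lerBlDr. Qed.

Let balance : (1 + m) * (k%:R - #|T|%:R) <= 2 * m * (n%:R - #|T|%:R).
Proof. by have := gap_le; nra. Qed.

Let le_kn : (k <= n)%N.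
Proof.
rewrite -(ler_nat R) -subr_ge0 -(pmulr_rge0 _ (_ : 0 < 2 * m)) ?mulr_gt0 //.
by apply: le_trans gap_le; rewrite mulr_ge0 // subr_ge0 ?ler_nat //; apply: ltW.
Qed.

Lemma card_Snk_supsets_gt0 : (0 < #|S|)%N.
Proof.
by rewrite card_Snk_rows_supsets card_supsets // card_ord bin_gt0 leq_sub2r.
Qed.

Lemma dotp_Snk_supsets_in i : i \in T -> #|S|%:R * m <= dotp (\sum_(A in S) U A) (V i).
Proof.
by move=> iT; apply: (dotp_sum_ge embUV) => A; rewrite inE => /subsetP; apply.
Qed.

Lemma dotp_Snk_supsets_out j : j \notin T -> dotp (\sum_(A in S) U A) (V j) <= #|S|%:R * m.
Proof.
move=> jT; apply: le_trans (dotp_sum_le embUV S j) _.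
set Sj := [set A in S | Snk A j].
have SjE : #|Sj| = #|[set B : {set 'I_n} | j |: T \subset B & #|B| == k]|.
  rewrite -card_Snk_rows_supsets; apply: eq_card => A.
  by rewrite !inE subUset sub1set andbC.
have ratio : (#|Sj| * (n - #|T|) = #|S| * (k - #|T|))%N.
  by rewrite SjE card_Snk_rows_supsets -[in RHS](card_supsetsU1 k jT) card_ord.
have lt_Tn : (#|T| < n)%N.
  have : T \proper [set: 'I_n] by rewrite properT; apply: contraNneq jT => ->.
  by move/proper_card; rewrite cardsT card_ord.
have ratioR : (#|Sj|%:R : R) * (n%:R - #|T|%:R) = #|S|%:R * (k%:R - #|T|%:R).
  by rewrite -!natrB ?(ltnW lt_Tn) // -!natrM ratio.
have nT_gt0 : (0 : R) < n%:R - #|T|%:R by rewrite subr_gt0 ltr_nat.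
suff : (1 + m) * #|Sj|%:R <= 2 * m * #|S|%:R by lra.
rewrite -(ler_pM2r nT_gt0); have := ler_wpM2l (ler0n R #|S|) balance.
have := congr1 (fun x => (1 + m) * x) ratioR => /=.
nra.
Qed.

End SnkSeparation.

Theorem propositionG2 (R : realType) (d n k : nat) (m : R)
  (U : Snk_rows n k -> 'rV[R]_d) (V : 'I_n -> 'rV[R]_d) :
  embedding (Snk (n:=n) (k:=k)) m U V ->
  0 < m -> m < 1 ->
  forall T : {set 'I_n},
    Num.max 1 (k%:R - 2 * m * (n%:R - k%:R) / (1 - m)) <= #|T|%:R ->
    (#|T| <= k)%N ->
    exists (h : 'rV[R]_d) (c : R),
      unitv h /\
      (forall i, i \in T -> c <= dotp h (V i)) /\
      (forall j, j \notin T -> dotp h (V j) <= c).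
Proof.
move=> embUV m_gt0 m_lt1 T; rewrite ge_max => /andP[T_ge1 margin] leTk.
have [i0 i0T] : exists i0, i0 \in T by apply/card_gt0P; rewrite -(ler1n R).
have dotp_in := dotp_Snk_supsets_in embUV (T := T).
apply: (exists_unit_separator _ dotp_in (dotp_Snk_supsets_out embUV m_lt1 leTk margin)).
apply: (dotp_self_gt0 (v := V i0)); rewrite gt_eqF // (lt_le_trans _ (dotp_in i0 i0T)) //.
by rewrite mulr_gt0 // ltr0n (card_Snk_supsets_gt0 m_gt0 m_lt1 leTk margin).
Qed.
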